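(* Let $\mathcal C$ be an energy timed path forming a cycle from state $s_0$ back to $s_0$, and let $L\in\mathbb Q$. For $U\in\mathbb Q$ let $\mathcal R_{\mathcal C}(w_0,w_1,U)$ denote $\mathcal R^{[L;U]}_{\mathcal C}(w_0,w_1)$, and define $$\mathcal R^\infty_{\mathcal C}(a,b,U)\iff L\le a\le b\le U\ \wedge\ \forall w_0\in[a;b].\ \exists w_1\in[a;b].\ \mathcal R_{\mathcal C}(w_0,w_1,U).$$ Assume the set $\{(a,b,U)\mid \mathcal R^\infty_{\mathcal C}(a,b,U)\}$ is nonempty. Then there is a least value $a^{\mathcal C}_{\min}\in\mathbb Q$ such that $\{(b,U)\mid \mathcal R^\infty_{\mathcal C}(a^{\mathcal C}_{\min},b,U)\}\neq\emptyset$, and: (1) for every energy level $w<a^{\mathcal C}_{\min}$ and every $U$, there is no infinite run from $(s_0,\mathbf 0,w)$ iterating $\mathcal C$ forever and satisfying the energy constraint $[L;U]$; (2) for every $w\ge a^{\mathcal C}_{\min}$ there exist $U$ and an infinite run from $(s_0,\mathbf 0,w)$ iterating $\mathcal C$ forever and satisfying $[L;U]$.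
   Context: An energy timed automaton is a timed automaton with closed (non-strict) clock constraints, a rational energy rate $r(s)$ in each state and a rational energy update $u$ on each transition; during a delay $d\ge0$ in state $s$ the energy grows by $d\cdot r(s)$, and a transition adds $u$. An energy timed path (ETP) from $s_0$ to $s_n$ is such an automaton whose states $s_0,\dots,s_n$ are linked by exactly one transition from $s_i$ to $s_{i+1}$ each; a cycle is an ETP whose last state is identified with its first state $s_0$. A run satisfies the energy constraint $[L;U]$ if all its energy levels lie in $[L;U]$. For an energy constraint $E$, $\mathcal R^E_{\mathcal C}(w_0,w_1)$ holds iff there is a finite run of $\mathcal C$ from $(s_0,\mathbf 0,w_0)$ to $(s_0,\mathbf 0,w_1)$ satisfying $E$ ($\mathbf 0$ the zero clock valuation). An infinite run iterating $\mathcal C$ forever is a concatenation of infinitely many runs of $\mathcal C$, each starting and ending with all clocks $0$, the final energy of one being the initial energy of the next. *)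

From Stdlib Require Import Reals QArith Qreals List Lia.
Open Scope R_scope.

Definition valuation := nat -> R.

Inductive atom : Type :=
| ALe : nat -> nat -> atom
| AGe : nat -> nat -> atom.

Definition constraint := list atom.

Definition sat_atom (v : valuation) (a : atom) : Prop :=
  match a with
  | ALe x c => v x <= INR c
  | AGe x c => INR c <= v x
  end.

Definition sat (g : constraint) (v : valuation) : Prop :=
  forall a, In a g -> sat_atom v a.

Definition delay (v : valuation) (d : R) : valuation := fun x => v x + d.

Definition reset (r : list nat) (v : valuation) : valuation :=
  fun x => if in_dec Nat.eq_dec x r then 0 else v x.

Definition zero_val : valuation := fun _ => 0.

(** An energy timed path forming a cycle: states s_0 .. s_{n-1}, and for each
    i < n exactly one transition from s_i to s_{(i+1) mod n} (the last one
    returns to s_0). *)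
Record cycleETP : Type := {
  nstates : nat;
  nclk    : nat;
  rate    : nat -> Q;
  inv     : nat -> constraint;
  guard   : nat -> constraint;
  resets  : nat -> list nat;
  upd     : nat -> Q
}.

Definition atom_clock (a : atom) : nat :=
  match a with ALe x _ => x | AGe x _ => x end.

Definition wf_cycle (C : cycleETP) : Prop :=
  (1 <= nstates C)%nat /\
  forall i, (i < nstates C)%nat ->
    (forall a, In a (inv C i) -> (atom_clock a < nclk C)%nat) /\
    (forall a, In a (guard C i) -> (atom_clock a < nclk C)%nat) /\
    (forall x, In x (resets C i) -> (x < nclk C)%nat).

Definition inE (L U : Q) (e : R) : Prop := Q2R L <= e <= Q2R U.

(** Configuration i is (s_i, v i, e i); in s_i one delays d i >= 0
    (energy grows by d i * r(s_i)), then takes transition i.  Since the energy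
    is affine during a delay and invariants are convex, it suffices to check
    the endpoints of each delay. *)
Definition RC (C : cycleETP) (L U : Q) (w0 w1 : R) : Prop :=
  exists (d : nat -> R) (v : nat -> valuation) (e : nat -> R),
    v 0%nat = zero_val /\ e 0%nat = w0 /\
    (forall i, (i < nstates C)%nat ->
       0 <= d i /\
       sat (inv C i) (v i) /\
       sat (inv C i) (delay (v i) (d i)) /\
       sat (guard C i) (delay (v i) (d i)) /\
       v (S i) = reset (resets C i) (delay (v i) (d i)) /\
       e (S i) = e i + d i * Q2R (rate C i) + Q2R (upd C i) /\
       inE L U (e i) /\
       inE L U (e i + d i * Q2R (rate C i))) /\
    (forall x, (x < nclk C)%nat -> v (nstates C) x = 0) /\
    e (nstates C) = w1 /\ inE L U (e (nstates C)).

Definition Rinf (C : cycleETP) (L a b U : Q) : Prop :=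
  (L <= a)%Q /\ (a <= b)%Q /\ (b <= U)%Q /\
  forall w0, Q2R a <= w0 <= Q2R b ->
    exists w1, Q2R a <= w1 <= Q2R b /\ RC C L U w0 w1.

(** An infinite run from (s_0, 0, w) iterating C forever and satisfying [L;U]:
    a concatenation of runs of C, each starting and ending with all clocks 0. *)
Definition infRun (C : cycleETP) (L U : Q) (w : R) : Prop :=
  exists W : nat -> R, W 0%nat = w /\ forall k, RC C L U (W k) (W (S k)).

From Stdlib Require Import Reals QArith Qreals.
From Stdlib Require Import List Lia Lra ClassicalEpsilon Classical FunctionalExtensionality.
Open Scope R_scope.

(* Measure energies relative to the start of a traversal of the cycle: a
   traversal realises (low, gain) if every intermediate energy is at least low
   and the final one at least gain.  Clock values and energies are affine in the delays,
   so the realisable pairs are the projection of a rational polyhedron, hence a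
   rational polyhedron themselves (Fourier-Motzkin elimination).  Therefore the
   drops realisable with gain >= 0 form a closed half-line (-oo; q] with q
   rational, and a_min = L - q.  An infinite run from w never goes below L, so it
   contains rounds starting at most at w that lose arbitrarily little energy;
   by closedness there is a loss-free traversal with drop L - w, i.e. w >= a_min.
   Conversely a loss-free traversal from a_min, glued with the given R^oo
   interval, gives an R^oo interval starting at a_min, hence an infinite run;
   higher starting levels are handled by shifting runs upwards. *)

Fixpoint lin_form (N : nat) (a x : nat -> R) : R :=
  match N with O => 0 | S N' => lin_form N' a x + a N' * x N' end.

Lemma lin_form_eq_x N a x x' :
  (forall j, (j < N)%nat -> x j = x' j) -> lin_form N a x = lin_form N a x'.
Proof.
  induction N as [|N IH]; simpl; intros H; [reflexivity|].
  rewrite IH by (intros; apply H; lia). rewrite H by lia. reflexivity.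
Qed.

Lemma lin_form_eq_a N a a' x :
  (forall j, (j < N)%nat -> a j = a' j) -> lin_form N a x = lin_form N a' x.
Proof.
  induction N as [|N IH]; simpl; intros H; [reflexivity|].
  rewrite IH by (intros; apply H; lia). rewrite H by lia. reflexivity.
Qed.

Lemma lin_form_comb N al be a b x :
  lin_form N (fun j => al * a j + be * b j) x = al * lin_form N a x + be * lin_form N b x.
Proof. induction N as [|N IH]; simpl; [|rewrite IH]; ring. Qed.

Lemma lin_form_zero N x : lin_form N (fun _ => 0) x = 0.
Proof. induction N as [|N IH]; simpl; [|rewrite IH]; ring. Qed.

Lemma lin_form_unit N j x :
  (j < N)%nat -> lin_form N (fun k => if Nat.eqb k j then 1 else 0) x = x j.
Proof.
  induction N as [|N IH]; intros Hj; [lia|]. simpl.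
  destruct (Nat.eqb_spec N j) as [<-|Hne].
  - rewrite (lin_form_eq_a _ _ (fun _ => 0)), lin_form_zero; [ring|].
    intros k Hk. destruct (Nat.eqb_spec k N); [lia|reflexivity].
  - rewrite IH by lia. ring.
Qed.

Definition set_coord (x : nat -> R) (N : nat) (y : R) : nat -> R :=
  fun j => if Nat.eq_dec j N then y else x j.

Lemma lin_form_set_coord N a x y :
  lin_form (S N) a (set_coord x N y) = lin_form N a x + a N * y.
Proof.
  simpl. unfold set_coord at 2. destruct (Nat.eq_dec N N) as [_|]; [|congruence].
  f_equal. apply lin_form_eq_x. intros j Hj.
  unfold set_coord. destruct (Nat.eq_dec j N); [lia|reflexivity].
Qed.

(** Points are sequences [nat -> R]; in dimension [N] only the first [N]
    coordinates are read. *)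
Definition halfspace := ((nat -> Q) * Q)%type.

Definition coefs (c : halfspace) : nat -> R := fun j => Q2R (fst c j).

Definition in_halfspace N (c : halfspace) (x : nat -> R) : Prop :=
  lin_form N (coefs c) x <= Q2R (snd c).

Definition in_halfspaces N (cs : list halfspace) (x : nat -> R) : Prop :=
  forall c, In c cs -> in_halfspace N c x.

Definition polyhedral N (P : (nat -> R) -> Prop) : Prop :=
  exists cs, forall x, P x <-> in_halfspaces N cs x.

Lemma in_halfspaces_eq_x N cs x x' :
  (forall j, (j < N)%nat -> x j = x' j) -> in_halfspaces N cs x -> in_halfspaces N cs x'.
Proof.
  intros E H c Hc. unfold in_halfspace. rewrite <- (lin_form_eq_x _ _ _ _ E). apply H, Hc.
Qed.

Lemma Q2R0 : Q2R 0 = 0.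
Proof. unfold Q2R; simpl; ring. Qed.

Lemma Q2R1 : Q2R 1 = 1.
Proof. unfold Q2R; simpl; field. Qed.

Lemma le_div_pos a y z : 0 < a -> (y <= z / a <-> a * y <= z).
Proof.
  intros Ha. split; intros H.
  - apply (Rmult_le_compat_l a) in H; [|lra].
    replace (a * (z / a)) with z in H by (field; lra). exact H.
  - apply (Rmult_le_reg_l a); [exact Ha|].
    replace (a * (z / a)) with z by (field; lra). exact H.
Qed.

Lemma div_le_neg a y z : a < 0 -> (z / a <= y <-> a * y <= z).
Proof.
  intros Ha. split; intros H.
  - apply (Rmult_le_compat_l (- a)) in H; [|lra].
    replace (- a * (z / a)) with (- z) in H by (field; lra). lra.
  - apply (Rmult_le_reg_l (- a)); [lra|].
    replace (- a * (z / a)) with (- z) by (field; lra). lra.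
Qed.

Definition coef_cmp N (c : halfspace) : comparison := (fst c N ?= 0)%Q.

Definition has_sign (s : comparison) N (c : halfspace) : bool :=
  match coef_cmp N c, s with
  | Eq, Eq | Lt, Lt | Gt, Gt => true
  | _, _ => false
  end.

Lemma has_sign_cases N c :
  has_sign Eq N c = true \/ has_sign Gt N c = true \/ has_sign Lt N c = true.
Proof. unfold has_sign. destruct (coef_cmp N c); auto. Qed.

Lemma coef_cmp_Q2R N c :
  match coef_cmp N c with
  | Eq => Q2R (fst c N) = 0
  | Lt => Q2R (fst c N) < 0
  | Gt => 0 < Q2R (fst c N)
  end.
Proof.
  unfold coef_cmp. rewrite <- Q2R0.
  destruct (Qcompare_spec (fst c N) 0) as [E|E|E].
  - apply Qeq_eqR, E.
  - apply Qlt_Rlt, E.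
  - apply Qlt_Rlt, E.
Qed.

Lemma has_sign_Eq N c : has_sign Eq N c = true -> Q2R (fst c N) = 0.
Proof. pose proof (coef_cmp_Q2R N c). unfold has_sign. destruct (coef_cmp N c); easy. Qed.

Lemma has_sign_Gt N c : has_sign Gt N c = true -> 0 < Q2R (fst c N).
Proof. pose proof (coef_cmp_Q2R N c). unfold has_sign. destruct (coef_cmp N c); easy. Qed.

Lemma has_sign_Lt N c : has_sign Lt N c = true -> Q2R (fst c N) < 0.
Proof. pose proof (coef_cmp_Q2R N c). unfold has_sign. destruct (coef_cmp N c); easy. Qed.

Definition tight_value N (x : nat -> R) (c : halfspace) : R :=
  (Q2R (snd c) - lin_form N (coefs c) x) / Q2R (fst c N).

Lemma in_halfspace_set_coord_zero N c x y :
  Q2R (fst c N) = 0 -> (in_halfspace (S N) c (set_coord x N y) <-> in_halfspace N c x).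
Proof.
  intros H0. unfold in_halfspace. rewrite lin_form_set_coord. unfold coefs at 2.
  rewrite H0, Rmult_0_l, Rplus_0_r. reflexivity.
Qed.

Lemma in_halfspace_set_coord_pos N c x y :
  0 < Q2R (fst c N) -> (in_halfspace (S N) c (set_coord x N y) <-> y <= tight_value N x c).
Proof.
  intros Hp. unfold in_halfspace, tight_value. rewrite lin_form_set_coord, le_div_pos by exact Hp.
  unfold coefs at 2. lra.
Qed.

Lemma in_halfspace_set_coord_neg N c x y :
  Q2R (fst c N) < 0 -> (in_halfspace (S N) c (set_coord x N y) <-> tight_value N x c <= y).
Proof.
  intros Hn. unfold in_halfspace, tight_value. rewrite lin_form_set_coord, div_le_neg by exact Hn.
  unfold coefs at 2. lra.
Qed.

(** The positive combination of [p] and [q] cancelling coordinate [N]. *)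
Definition fm_combine N (p q : halfspace) : halfspace :=
  (fun j => - fst q N * fst p j + fst p N * fst q j, - fst q N * snd p + fst p N * snd q)%Q.

Lemma in_halfspace_fm_combine N p q x :
  0 < Q2R (fst p N) -> Q2R (fst q N) < 0 ->
  (in_halfspace N (fm_combine N p q) x <-> tight_value N x q <= tight_value N x p).
Proof.
  intros Hp Hq. unfold in_halfspace, tight_value.
  rewrite (lin_form_eq_a _ _ (fun j => - Q2R (fst q N) * coefs p j + Q2R (fst p N) * coefs q j)),
    lin_form_comb
    by (intros; unfold coefs; simpl; rewrite Q2R_plus, !Q2R_mult, Q2R_opp; ring).
  simpl. rewrite Q2R_plus, !Q2R_mult, Q2R_opp.
  set (hp := (Q2R (snd p) - lin_form N (coefs p) x) / Q2R (fst p N)).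
  set (hq := (Q2R (snd q) - lin_form N (coefs q) x) / Q2R (fst q N)).
  assert (Ep : Q2R (snd p) = lin_form N (coefs p) x + Q2R (fst p N) * hp) by (unfold hp; field; lra).
  assert (Eq : Q2R (snd q) = lin_form N (coefs q) x + Q2R (fst q N) * hq) by (unfold hq; field; lra).
  set (a := Q2R (fst p N)) in *. set (b := Q2R (fst q N)) in *.
  rewrite Ep, Eq. set (lp := lin_form N (coefs p) x). set (lq := lin_form N (coefs q) x).
  assert (Hab : 0 < a * - b) by (apply Rmult_lt_0_compat; lra).
  assert (Key : - b * (lp + a * hp) + a * (lq + b * hq) - (- b * lp + a * lq) = a * - b * (hp - hq))
    by ring.
  split; intros H.
  - destruct (Rle_lt_dec hq hp) as [Hle|Hlt]; [exact Hle|].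
    assert (0 < a * - b * (hq - hp)) by (apply Rmult_lt_0_compat; lra).
    replace (a * - b * (hq - hp)) with (- (a * - b * (hp - hq))) in * by ring. lra.
  - assert (0 <= a * - b * (hp - hq)) by (apply Rmult_le_pos; lra). lra.
Qed.

Definition fm_elim N (cs : list halfspace) : list halfspace :=
  filter (has_sign Eq N) cs ++
  flat_map (fun p => map (fm_combine N p) (filter (has_sign Lt N) cs)) (filter (has_sign Gt N) cs).

Lemma fm_elim_sound N cs x y :
  in_halfspaces (S N) cs (set_coord x N y) -> in_halfspaces N (fm_elim N cs) x.
Proof.
  intros H c Hc. apply in_app_or in Hc as [Hc|Hc].
  - apply filter_In in Hc as [Hc Hz].
    apply (in_halfspace_set_coord_zero N c x y (has_sign_Eq _ _ Hz)), H, Hc.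
  - apply in_flat_map in Hc as [p [Hp Hc]]. apply in_map_iff in Hc as [q [<- Hq]].
    apply filter_In in Hp as [Hp Hpos], Hq as [Hq Hneg].
    apply has_sign_Gt in Hpos. apply has_sign_Lt in Hneg.
    apply in_halfspace_fm_combine; [exact Hpos|exact Hneg|].
    apply (Rle_trans _ y).
    + apply (in_halfspace_set_coord_neg N q x y Hneg), H, Hq.
    + apply (in_halfspace_set_coord_pos N p x y Hpos), H, Hp.
Qed.

Lemma exists_between (lo hi : list R) :
  (forall l h, In l lo -> In h hi -> l <= h) ->
  exists y, (forall l, In l lo -> l <= y) /\ (forall h, In h hi -> y <= h).
Proof.
  induction lo as [|l lo IH]; intros H.
  - clear H. induction hi as [|h hi [y [_ Hy]]].
    + exists 0. split; intros ? [].
    + exists (Rmin h y). split; [intros ? []|].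
      intros h' [<-|Hh]; [apply Rmin_l|]. eapply Rle_trans; [apply Rmin_r|auto].
  - destruct IH as [y [H1 H2]]; [intros; apply H; simpl; auto|].
    exists (Rmax l y). split.
    + intros l' [<-|Hl]; [apply Rmax_l|]. eapply Rle_trans; [apply H1, Hl|apply Rmax_r].
    + intros h Hh. apply Rmax_lub; [apply H; simpl; auto|auto].
Qed.

Lemma fm_elim_complete N cs x :
  in_halfspaces N (fm_elim N cs) x -> exists y, in_halfspaces (S N) cs (set_coord x N y).
Proof.
  intros H.
  destruct (exists_between (map (tight_value N x) (filter (has_sign Lt N) cs))
                           (map (tight_value N x) (filter (has_sign Gt N) cs)))
    as [y [Hlo Hhi]].
  - intros l h Hl Hh. apply in_map_iff in Hl as [q [<- Hq]], Hh as [p [<- Hp]].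
    pose proof Hq as [_ Hneg]%filter_In. pose proof Hp as [_ Hpos]%filter_In.
    apply (in_halfspace_fm_combine N p q x (has_sign_Gt _ _ Hpos) (has_sign_Lt _ _ Hneg)), H.
    apply in_or_app. right. apply in_flat_map. exists p. split; [exact Hp|apply in_map, Hq].
  - exists y. intros c Hc.
    destruct (has_sign_cases N c) as [Hs|[Hs|Hs]].
    + apply (in_halfspace_set_coord_zero N c x y (has_sign_Eq _ _ Hs)), H.
      apply in_or_app. left. apply filter_In. auto.
    + apply (in_halfspace_set_coord_pos N c x y (has_sign_Gt _ _ Hs)), Hhi.
      apply in_map, filter_In. auto.
    + apply (in_halfspace_set_coord_neg N c x y (has_sign_Lt _ _ Hs)), Hlo.
      apply in_map, filter_In. auto.
Qed.

Lemma polyhedral_exists_last N P :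
  polyhedral (S N) P -> polyhedral N (fun x => exists y, P (set_coord x N y)).
Proof.
  intros [cs Hcs]. exists (fm_elim N cs). intros x. split.
  - intros [y Hy]. apply (fm_elim_sound N cs x y), Hcs, Hy.
  - intros [y Hy]%fm_elim_complete. exists y. apply Hcs, Hy.
Qed.

Lemma polyhedral_project K n P :
  polyhedral (K + n) P ->
  polyhedral K (fun x => exists x', (forall j, (j < K)%nat -> x' j = x j) /\ P x').
Proof.
  revert P. induction n as [|n IH]; intros P HP.
  - rewrite Nat.add_0_r in HP. destruct HP as [cs Hcs]. exists cs. intros x. split.
    + intros [x' [Hx' HP']]. eapply in_halfspaces_eq_x; [exact Hx'|apply Hcs, HP'].
    + intros H. exists x. split; [reflexivity|apply Hcs, H].
  - rewrite Nat.add_succ_r in HP. apply polyhedral_exists_last, IH in HP as [cs Hcs].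
    exists cs. intros x. rewrite <- Hcs. split.
    + intros [x' [Hx' HP']]. exists x'. split; [exact Hx'|]. exists (x' (K + n)%nat).
      replace (set_coord x' (K + n) (x' (K + n)%nat)) with x'; [exact HP'|].
      apply functional_extensionality. intros j. unfold set_coord.
      destruct (Nat.eq_dec j (K + n)); subst; reflexivity.
    + intros [x' [Hx' [y Hy]]]. exists (set_coord x' (K + n) y). split; [|exact Hy].
      intros j Hj. unfold set_coord. destruct (Nat.eq_dec j (K + n)); [lia|auto].
Qed.

Definition affine N (f : (nat -> R) -> R) : Prop :=
  exists (a : nat -> Q) (c : Q), forall x, f x = lin_form N (fun j => Q2R (a j)) x + Q2R c.

Lemma affine_ext N f g : (forall x, f x = g x) -> affine N f -> affine N g.
Proof. intros E [a [c H]]. exists a, c. intros x. rewrite <- E. apply H. Qed.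

Lemma affine_const N q : affine N (fun _ => Q2R q).
Proof.
  exists (fun _ => 0%Q), q. intros x.
  rewrite (lin_form_eq_a _ _ (fun _ => 0)), lin_form_zero by (intros; apply Q2R0). ring.
Qed.

Lemma affine_zero N : affine N (fun _ => 0).
Proof. apply (affine_ext N (fun _ => Q2R 0)); [intros; apply Q2R0|apply affine_const]. Qed.

Lemma affine_coord N j : (j < N)%nat -> affine N (fun x => x j).
Proof.
  intros Hj. exists (fun k => if Nat.eqb k j then 1%Q else 0%Q), 0%Q. intros x.
  rewrite (lin_form_eq_a _ _ (fun k => if Nat.eqb k j then 1 else 0)), lin_form_unit, Q2R0
    by (try intros k _; try destruct (Nat.eqb k j); auto using Q2R0, Q2R1).
  ring.
Qed.

Lemma affine_add N f g : affine N f -> affine N g -> affine N (fun x => f x + g x).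
Proof.
  intros [a [c Ha]] [b [d Hb]]. exists (fun j => a j + b j)%Q, (c + d)%Q. intros x.
  rewrite Ha, Hb, Q2R_plus,
    (lin_form_eq_a N (fun j => Q2R (a j + b j)) (fun j => 1 * Q2R (a j) + 1 * Q2R (b j))), lin_form_comb
    by (intros; rewrite Q2R_plus; ring).
  ring.
Qed.

Lemma affine_scale N q f : affine N f -> affine N (fun x => Q2R q * f x).
Proof.
  intros [a [c Ha]]. exists (fun j => q * a j)%Q, (q * c)%Q. intros x.
  rewrite Ha, Q2R_mult,
    (lin_form_eq_a N (fun j => Q2R (q * a j)) (fun j => Q2R q * Q2R (a j) + 0 * Q2R (a j))), lin_form_comb
    by (intros; rewrite Q2R_mult; ring).
  ring.
Qed.

Lemma affine_sub N f g : affine N f -> affine N g -> affine N (fun x => f x - g x).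
Proof.
  intros Hf Hg. apply (affine_ext N (fun x => f x + Q2R (Qopp 1) * g x)).
  - intros x. rewrite Q2R_opp, Q2R1. ring.
  - apply affine_add, affine_scale; assumption.
Qed.

Lemma polyhedral_ext N (P P' : (nat -> R) -> Prop) :
  (forall x, P x <-> P' x) -> polyhedral N P -> polyhedral N P'.
Proof. intros E [cs H]. exists cs. intros x. rewrite <- E. apply H. Qed.

Lemma polyhedral_true N : polyhedral N (fun _ => True).
Proof. exists nil. intros x. split; [intros _ c []|auto]. Qed.

Lemma polyhedral_and N P P' :
  polyhedral N P -> polyhedral N P' -> polyhedral N (fun x => P x /\ P' x).
Proof.
  intros [cs H] [cs' H']. exists (cs ++ cs'). intros x. rewrite H, H'. split.
  - intros [A B] c [Hc|Hc]%in_app_or; auto.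
  - intros A. split; intros c Hc; apply A, in_or_app; auto.
Qed.

Lemma polyhedral_le N f g : affine N f -> affine N g -> polyhedral N (fun x => f x <= g x).
Proof.
  intros Hf Hg. destruct (affine_sub N f g Hf Hg) as [a [c H]].
  exists ((a, (- c)%Q) :: nil). intros x. specialize (H x).
  unfold in_halfspaces, in_halfspace, coefs. split.
  - intros Hle c' [<-|[]]. cbn [fst snd]. rewrite Q2R_opp. lra.
  - intros Hc. specialize (Hc _ (or_introl eq_refl)). cbn [fst snd] in Hc.
    rewrite Q2R_opp in Hc. lra.
Qed.

Lemma polyhedral_forall_in {A} N (l : list A) (P : A -> (nat -> R) -> Prop) :
  (forall z, In z l -> polyhedral N (P z)) -> polyhedral N (fun x => forall z, In z l -> P z x).
Proof.
  induction l as [|a l IH]; intros H.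
  - apply (polyhedral_ext N (fun _ => True)); [|apply polyhedral_true].
    intros x. split; [intros _ z []|auto].
  - apply (polyhedral_ext N (fun x => P a x /\ (forall z, In z l -> P z x))).
    + intros x. split; [intros [HA HB] z [<-|Hz]; auto|].
      intros HA. split; [apply HA|intros; apply HA]; simpl; auto.
    + apply polyhedral_and; [apply H; simpl; auto|apply IH; intros; apply H; simpl; auto].
Qed.

Lemma polyhedral_forall_lt N n (P : nat -> (nat -> R) -> Prop) :
  (forall i, (i < n)%nat -> polyhedral N (P i)) ->
  polyhedral N (fun x => forall i, (i < n)%nat -> P i x).
Proof.
  intros H. apply (polyhedral_ext N (fun x => forall i, In i (seq 0 n) -> P i x)).
  - intros x. split; intros Hx i Hi; apply Hx.
    + apply in_seq. lia.
    + apply in_seq in Hi. lia.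
  - apply polyhedral_forall_in. intros i Hi%in_seq. apply H. lia.
Qed.

Lemma INR_eq_Q2R c : INR c = Q2R (inject_Z (Z.of_nat c)).
Proof. unfold Q2R; simpl. rewrite INR_IZR_INZ. field. Qed.

Lemma polyhedral_sat N g (V : (nat -> R) -> valuation) :
  (forall y, affine N (fun x => V x y)) -> polyhedral N (fun x => sat g (V x)).
Proof.
  intros HV. apply polyhedral_forall_in. intros [y c|y c] _; simpl; rewrite INR_eq_Q2R;
    apply polyhedral_le; auto using affine_const.
Qed.

Fixpoint cycle_val (C : cycleETP) (d : nat -> R) (i : nat) : valuation :=
  match i with
  | O => zero_val
  | S i' => reset (resets C i') (delay (cycle_val C d i') (d i'))
  end.

Fixpoint cycle_gain (C : cycleETP) (d : nat -> R) (i : nat) : R :=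
  match i with
  | O => 0
  | S i' => cycle_gain C d i' + d i' * Q2R (rate C i') + Q2R (upd C i')
  end.

Definition feasible_delays (C : cycleETP) (d : nat -> R) : Prop :=
  (forall i, (i < nstates C)%nat ->
     0 <= d i /\ sat (inv C i) (cycle_val C d i) /\
     sat (inv C i) (delay (cycle_val C d i) (d i)) /\
     sat (guard C i) (delay (cycle_val C d i) (d i))) /\
  (forall y, (y < nclk C)%nat -> cycle_val C d (nstates C) y = 0).

(** Energies are relative to the initial level, so a run of [C] from level [w]
    within [[L; U]] gives [low = L - w]. *)
Definition traversal_by (C : cycleETP) (d : nat -> R) (low gain : R) : Prop :=
  feasible_delays C d /\
  (forall i, (i <= nstates C)%nat -> low <= cycle_gain C d i) /\
  (forall i, (i < nstates C)%nat -> low <= cycle_gain C d i + d i * Q2R (rate C i)) /\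
  gain <= cycle_gain C d (nstates C).

Definition traversal (C : cycleETP) (low gain : R) : Prop :=
  exists d, traversal_by C d low gain.

Lemma traversal_mono C low gain low' gain' :
  traversal C low gain -> low' <= low -> gain' <= gain -> traversal C low' gain'.
Proof.
  intros [d [HF [H1 [H2 H3]]]] Hl Hg. exists d.
  split; [exact HF|split; [|split]]; try intros i Hi; [specialize (H1 i Hi)|specialize (H2 i Hi)|]; lra.
Qed.

Lemma traversal_low_nonpos C low gain : traversal C low gain -> low <= 0.
Proof. intros [d [_ [H1 _]]]. apply (H1 O). lia. Qed.

(** The point [x] encodes [(low, gain, d 0, d 1, ...)]. *)
Definition delays_of (x : nat -> R) : nat -> R := fun i => x (S (S i)).

Lemma affine_cycle_val C i y :
  (i <= nstates C)%nat -> affine (2 + nstates C) (fun x => cycle_val C (delays_of x) i y).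
Proof.
  revert y. induction i as [|i IH]; intros y Hi; simpl.
  - apply affine_zero.
  - unfold reset, delay. destruct (in_dec Nat.eq_dec y (resets C i)).
    + apply affine_zero.
    + apply affine_add; [apply IH; lia|apply affine_coord; lia].
Qed.

Lemma affine_cycle_gain C i :
  (i <= nstates C)%nat -> affine (2 + nstates C) (fun x => cycle_gain C (delays_of x) i).
Proof.
  induction i as [|i IH]; intros Hi; simpl.
  - apply affine_zero.
  - apply affine_add; [apply affine_add; [apply IH; lia|]|apply affine_const].
    apply (affine_ext _ (fun x => Q2R (rate C i) * delays_of x i)); [intros; ring|].
    apply affine_scale, affine_coord. lia.
Qed.

Lemma polyhedral_traversal_by C :
  polyhedral (2 + nstates C) (fun x => traversal_by C (delays_of x) (x 0%nat) (x 1%nat)).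
Proof.
  set (n := nstates C).
  assert (Hv : forall i, (i <= n)%nat -> forall y, affine (2 + n) (fun x => cycle_val C (delays_of x) i y))
    by (intros; apply affine_cycle_val; assumption).
  assert (Hg : forall i, (i <= n)%nat -> affine (2 + n) (fun x => cycle_gain C (delays_of x) i))
    by (intros; apply affine_cycle_gain; assumption).
  assert (Hd : forall i, (i < n)%nat -> affine (2 + n) (fun x => delays_of x i))
    by (intros; apply affine_coord; lia).
  assert (Hlow : affine (2 + n) (fun x => x 0%nat)) by (apply affine_coord; lia).
  unfold traversal_by, feasible_delays. fold n.
  repeat apply polyhedral_and.
  - apply polyhedral_forall_lt. intros i Hi.
    assert (Hvi : forall y, affine (2 + n) (fun x => cycle_val C (delays_of x) i y))
      by (apply Hv; lia).
    repeat apply polyhedral_and.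
    + apply polyhedral_le; [apply affine_zero|apply Hd, Hi].
    + apply polyhedral_sat, Hvi.
    + apply polyhedral_sat. intros y. apply affine_add; [apply Hvi|apply Hd, Hi].
    + apply polyhedral_sat. intros y. apply affine_add; [apply Hvi|apply Hd, Hi].
  - apply polyhedral_forall_lt. intros y Hy.
    apply (polyhedral_ext _ (fun x => cycle_val C (delays_of x) n y <= 0 /\
                                      0 <= cycle_val C (delays_of x) n y)); [intros; lra|].
    apply polyhedral_and; apply polyhedral_le; auto using affine_zero.
  - apply (polyhedral_ext _ (fun x => forall i, (i < S n)%nat -> x 0%nat <= cycle_gain C (delays_of x) i));
      [intros x; split; intros H i Hi; apply H; lia|].
    apply polyhedral_forall_lt. intros i Hi. apply polyhedral_le; [exact Hlow|apply Hg; lia].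
  - apply polyhedral_forall_lt. intros i Hi. apply polyhedral_le; [exact Hlow|].
    apply affine_add; [apply Hg; lia|].
    apply (affine_ext _ (fun x => Q2R (rate C i) * delays_of x i)); [intros; ring|].
    apply affine_scale, Hd, Hi.
  - apply polyhedral_le; [apply affine_coord; lia|apply Hg; lia].
Qed.

Lemma polyhedral_traversal C : polyhedral 2 (fun x => traversal C (x 0%nat) (x 1%nat)).
Proof.
  eapply polyhedral_ext; [|apply (polyhedral_project 2 (nstates C) _ (polyhedral_traversal_by C))].
  intros x. split.
  - intros [x' [Hx' Ht]]. exists (delays_of x'). rewrite <- (Hx' 0%nat), <- (Hx' 1%nat) by lia. exact Ht.
  - intros [d Hd].
    exists (fun j => match j with O => x 0%nat | 1%nat => x 1%nat | S (S k) => d k end).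
    split; [intros [|[|j]] Hj; [reflexivity|reflexivity|lia]|exact Hd].
Qed.

Lemma traversal_halfspaces C : exists cs : list halfspace, forall low gain,
  traversal C low gain <->
  forall c, In c cs -> Q2R (fst c 0%nat) * low + Q2R (fst c 1%nat) * gain <= Q2R (snd c).
Proof.
  destruct (polyhedral_traversal C) as [cs H]. exists cs. intros low gain.
  specialize (H (fun j => match j with O => low | _ => gain end)). cbn beta iota in H.
  rewrite H. unfold in_halfspaces, in_halfspace, coefs. simpl.
  split; intros A c Hc; specialize (A c Hc); lra.
Qed.

Lemma le_of_forall_pos_slack al be g t :
  (forall e, 0 < e -> al * t + be * - e <= g) -> al * t <= g.
Proof.
  intros H. destruct (Rle_lt_dec be 0) as [Hbe|Hbe].
  - specialize (H 1 Rlt_0_1). nra.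
  - destruct (Rle_lt_dec (al * t) g) as [Hle|Hlt]; [exact Hle|].
    assert (He : 0 < (al * t - g) / (2 * be)) by (apply Rdiv_lt_0_compat; lra).
    specialize (H _ He).
    replace (be * - ((al * t - g) / (2 * be))) with (- (al * t - g) / 2) in H by (field; lra).
    lra.
Qed.

Lemma traversal_gain_closed C low :
  (forall e, 0 < e -> traversal C low (- e)) -> traversal C low 0.
Proof.
  destruct (traversal_halfspaces C) as [cs H]. intros He. apply H. intros c Hc.
  rewrite Rmult_0_r, Rplus_0_r. apply (le_of_forall_pos_slack _ (Q2R (fst c 1%nat))).
  intros e Hpos. apply (proj1 (H _ _) (He e Hpos)), Hc.
Qed.

Definition halfline_sat (hs : list (Q * Q)) (t : R) : Prop :=
  forall h, In h hs -> Q2R (fst h) * t <= Q2R (snd h).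

Lemma halfline_sat_above hs t0 :
  halfline_sat hs t0 ->
  (exists q, forall t, t0 <= t -> (halfline_sat hs t <-> t <= Q2R q)) \/
  (forall t, t0 <= t -> halfline_sat hs t).
Proof.
  induction hs as [|[a b] hs IH]; intros H0.
  - right. intros t _ h [].
  - assert (Hhead : Q2R a * t0 <= Q2R b) by (apply (H0 (a, b)); left; reflexivity).
    assert (Hcons : forall t, halfline_sat ((a, b) :: hs) t <->
                      Q2R a * t <= Q2R b /\ halfline_sat hs t).
    { intros t. split; [intros Ht; split; [apply (Ht (a, b)); left|intros h Hh; apply Ht; right]; auto|].
      intros [Hab Hs] h [<-|Hh]; auto. }
    destruct (Qlt_le_dec 0 a) as [Ha|Ha].
    + apply Qlt_Rlt in Ha. rewrite Q2R0 in Ha.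
      assert (Hnz : ~ (a == 0)%Q) by (intros E; apply Qeq_eqR in E; rewrite Q2R0 in E; lra).
      assert (Hdiv : forall t, Q2R a * t <= Q2R b <-> t <= Q2R (b / a))
        by (intros t; rewrite Q2R_div, le_div_pos by assumption; reflexivity).
      left. destruct (IH (fun h Hh => H0 h (or_intror Hh))) as [[q Hq]|Hall].
      * destruct (Qlt_le_dec (b / a) q) as [Hlt|Hle]; [exists (b / a)%Q|exists q];
          intros t Ht; rewrite Hcons, Hq, Hdiv by exact Ht;
          [apply Qlt_Rlt in Hlt|apply Qle_Rle in Hle]; lra.
      * exists (b / a)%Q. intros t Ht. rewrite Hcons, Hdiv. specialize (Hall t Ht). tauto.
    + apply Qle_Rle in Ha. rewrite Q2R0 in Ha.
      assert (Hkeep : forall t, t0 <= t -> Q2R a * t <= Q2R b) by (intros; nra).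
      destruct (IH (fun h Hh => H0 h (or_intror Hh))) as [[q Hq]|Hall].
      * left. exists q. intros t Ht. rewrite Hcons, Hq by exact Ht. specialize (Hkeep t Ht). tauto.
      * right. intros t Ht. apply Hcons. auto.
Qed.

Lemma halfline_sat_max hs t0 B :
  halfline_sat hs t0 -> (forall t, halfline_sat hs t -> t <= B) ->
  exists q, halfline_sat hs (Q2R q) /\ forall t, halfline_sat hs t -> t <= Q2R q.
Proof.
  intros H0 HB. destruct (halfline_sat_above hs t0 H0) as [[q Hq]|Hall].
  - assert (Ht0q : t0 <= Q2R q) by (apply Hq; [lra|exact H0]).
    exists q. split; [apply Hq; lra|].
    intros t Ht. destruct (Rle_lt_dec t t0); [lra|apply Hq; [lra|exact Ht]].
  - exfalso. pose proof (Rmax_l t0 B). pose proof (Rmax_r t0 B).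
    assert (Hbig : Rmax t0 B + 1 <= B) by (apply HB, Hall; lra). lra.
Qed.

Lemma traversal_max_low C low0 :
  traversal C low0 0 ->
  exists q, traversal C (Q2R q) 0 /\ forall low, traversal C low 0 -> low <= Q2R q.
Proof.
  destruct (traversal_halfspaces C) as [cs H].
  set (hs := map (fun c : halfspace => (fst c 0%nat, snd c)) cs).
  assert (Hhs : forall low, traversal C low 0 <-> halfline_sat hs low).
  { intros low. rewrite H. unfold halfline_sat, hs. split.
    - intros A h [c [<- Hc]]%in_map_iff. specialize (A c Hc). simpl. lra.
    - intros A c Hc. specialize (A _ (in_map _ _ _ Hc)). simpl in A. lra. }
  intros H0. destruct (halfline_sat_max hs low0 0) as [q [Hq Hmax]].
  - apply Hhs, H0.
  - intros low Hlow. apply (traversal_low_nonpos C low 0), Hhs, Hlow.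
  - exists q. split; [apply Hhs, Hq|intros low Hlow; apply Hmax, Hhs, Hlow].
Qed.

Lemma RC_traversal C L U w0 w1 : RC C L U w0 w1 -> traversal C (Q2R L - w0) (w1 - w0).
Proof.
  intros [d [v [e [Hv0 [He0 [Hi [Hclk [Hen Hin]]]]]]]].
  assert (Hrun : forall i, (i <= nstates C)%nat -> v i = cycle_val C d i /\ e i = w0 + cycle_gain C d i).
  { induction i as [|i IH]; intros Hle; simpl; [split; [exact Hv0|rewrite He0; ring]|].
    destruct IH as [Ev Ee]; [lia|].
    destruct (Hi i) as [_ [_ [_ [_ [Ev' [Ee' _]]]]]]; [lia|].
    rewrite Ev', Ee', Ev, Ee. split; [reflexivity|ring]. }
  exists d. split; [split|split; [|split]].
  - intros i Hlt. destruct (Hrun i) as [Ev _]; [lia|]. rewrite <- Ev.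
    destruct (Hi i Hlt) as [? [? [? [? _]]]]. auto.
  - intros y Hy. destruct (Hrun (nstates C)) as [Ev _]; [lia|]. rewrite <- Ev. auto.
  - intros i Hle. destruct (Hrun i) as [_ Ee]; [exact Hle|].
    destruct (Nat.eq_dec i (nstates C)) as [->|Hne].
    + unfold inE in Hin. lra.
    + destruct (Hi i) as [_ [_ [_ [_ [_ [_ [Hini _]]]]]]]; [lia|]. unfold inE in Hini. lra.
  - intros i Hlt. destruct (Hrun i) as [_ Ee]; [lia|].
    destruct (Hi i Hlt) as [_ [_ [_ [_ [_ [_ [_ Hini]]]]]]]. unfold inE in Hini. lra.
  - destruct (Hrun (nstates C)) as [_ Ee]; [lia|]. lra.
Qed.

Lemma exists_rat_ge r : exists q, r <= Q2R q.
Proof.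
  destruct (INR_unbounded r) as [n Hn]. exists (inject_Z (Z.of_nat n)).
  rewrite <- INR_eq_Q2R. lra.
Qed.

Lemma finite_upper_bound (f : nat -> R) n : exists B, forall i, (i <= n)%nat -> f i <= B.
Proof.
  induction n as [|n [B HB]].
  - exists (f O). intros i Hi. replace i with O by lia. lra.
  - exists (Rmax B (f (S n))). intros i Hi. destruct (Nat.eq_dec i (S n)) as [->|Hne].
    + apply Rmax_r.
    + eapply Rle_trans; [apply HB; lia|apply Rmax_l].
Qed.

Lemma traversal_RC C L w :
  traversal C (Q2R L - w) 0 -> exists U w1, w <= w1 /\ RC C L U w w1.
Proof.
  intros [d [[Hfeas Hclk] [Hlow [Hlow' Hgain]]]]. set (n := nstates C) in *.
  destruct (finite_upper_bound
              (fun i => Rmax (w + cycle_gain C d i) (w + cycle_gain C d i + d i * Q2R (rate C i))) n)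
    as [B HB].
  destruct (exists_rat_ge B) as [U HU].
  exists U, (w + cycle_gain C d n). split; [lra|].
  exists d, (cycle_val C d), (fun i => w + cycle_gain C d i).
  split; [reflexivity|split; [simpl; ring|]].
  split; [|split; [exact Hclk|split; [reflexivity|]]].
  - intros i Hi. destruct (Hfeas i Hi) as [Hd [Hinv [Hinv' Hguard]]].
    specialize (HB i ltac:(lia)). specialize (Hlow i ltac:(lia)). specialize (Hlow' i Hi).
    pose proof (Rmax_l (w + cycle_gain C d i) (w + cycle_gain C d i + d i * Q2R (rate C i))).
    pose proof (Rmax_r (w + cycle_gain C d i) (w + cycle_gain C d i + d i * Q2R (rate C i))).
    unfold inE. cbv beta. repeat split; auto; try (simpl; ring); lra.
  - specialize (HB n ltac:(lia)). specialize (Hlow n ltac:(lia)).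
    pose proof (Rmax_l (w + cycle_gain C d n) (w + cycle_gain C d n + d n * Q2R (rate C n))).
    unfold inE. cbv beta. fold n. lra.
Qed.

Lemma RC_shift C L U U' w0 w1 t :
  RC C L U w0 w1 -> 0 <= t -> Q2R U + t <= Q2R U' -> RC C L U' (w0 + t) (w1 + t).
Proof.
  intros [d [v [e [Hv0 [He0 [Hi [Hclk [Hen Hin]]]]]]]] Ht HU.
  exists d, v, (fun i => e i + t). split; [exact Hv0|split; [rewrite He0; reflexivity|]].
  split; [|split; [exact Hclk|split; [rewrite Hen; reflexivity|]]].
  - intros i Hlt. destruct (Hi i Hlt) as [? [? [? [? [? [Ee [Hin1 Hin2]]]]]]].
    unfold inE in *. repeat split; auto; try rewrite Ee; lra.
  - unfold inE in *. lra.
Qed.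

Lemma RC_start_ge_L C L U w0 w1 : RC C L U w0 w1 -> Q2R L <= w0.
Proof.
  intros H. apply RC_traversal, traversal_low_nonpos in H. lra.
Qed.

Lemma infRun_shift C L U w w' :
  infRun C L U w -> w <= w' -> exists U', infRun C L U' w'.
Proof.
  intros [W [H0 H]] Hw. destruct (exists_rat_ge (Q2R U + (w' - w))) as [U' HU'].
  exists U', (fun k => W k + (w' - w)). split; [rewrite H0; ring|].
  intros k. apply RC_shift with U; [apply H|lra|exact HU'].
Qed.

Lemma Rinf_infRun C L a b U w : Rinf C L a b U -> Q2R a <= w <= Q2R b -> infRun C L U w.
Proof.
  intros [_ [_ [_ H]]] Hw.
  set (next := fun w0 => epsilon (inhabits 0) (fun w1 => Q2R a <= w1 <= Q2R b /\ RC C L U w0 w1)).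
  assert (Hnext : forall w0, Q2R a <= w0 <= Q2R b ->
                    Q2R a <= next w0 <= Q2R b /\ RC C L U w0 (next w0))
    by (intros w0 Hw0; apply epsilon_spec, H, Hw0).
  assert (Hin : forall k, Q2R a <= Nat.iter k next w <= Q2R b)
    by (induction k as [|k IH]; [exact Hw|apply Hnext, IH]).
  exists (fun k => Nat.iter k next w). split; [reflexivity|].
  intros k. apply Hnext, Hin.
Qed.

Lemma Rinf_traversal C L a b U : Rinf C L a b U -> traversal C (Q2R L - Q2R a) 0.
Proof.
  intros [_ [Hab [_ H]]]. apply Qle_Rle in Hab.
  destruct (H (Q2R a)) as [w1 [Hw1 HR]]; [lra|].
  apply RC_traversal in HR. eapply traversal_mono; [exact HR|lra|lra].
Qed.

Lemma exists_small_drop (W : nat -> R) B e :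
  0 < e -> (forall k, B <= W k) -> exists k, W k <= W O /\ - e < W (S k) - W k.
Proof.
  intros He HB. apply NNPP. intros Hnone.
  assert (Hdown : forall k, W k <= W O - INR k * e).
  { induction k as [|k IH]; [simpl; lra|].
    assert (Hstep : W (S k) - W k <= - e).
    { apply Rnot_lt_le. intros Hlt. apply Hnone. exists k. split; [|exact Hlt].
      pose proof (pos_INR k). nra. }
    rewrite S_INR. lra. }
  destruct (INR_unbounded ((W O - B) / e)) as [k Hk].
  apply (Rmult_lt_compat_r e) in Hk; [|exact He].
  replace ((W O - B) / e * e) with (W O - B) in Hk by (field; lra).
  specialize (Hdown k). specialize (HB k). lra.
Qed.

Lemma infRun_traversal C L U w : infRun C L U w -> traversal C (Q2R L - w) 0.
Proof.
  intros [W [HW0 HW]]. apply traversal_gain_closed. intros e He.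
  destruct (exists_small_drop W (Q2R L) e He) as [k [Hk Hdrop]].
  - intros k. apply (RC_start_ge_L C L U _ (W (S k))), HW.
  - eapply traversal_mono; [apply (RC_traversal _ _ _ _ _ (HW k))|subst w; lra|lra].
Qed.

Lemma RC_shift_into C L U0 U w0 w1 t lo hi :
  RC C L U0 w0 w1 -> 0 <= t -> Q2R U0 + t <= Q2R U -> lo <= w1 + t <= hi ->
  exists w2, lo <= w2 <= hi /\ RC C L U (w0 + t) w2.
Proof. intros HR Ht HU Hw. exists (w1 + t). split; [exact Hw|apply RC_shift with U0; assumption]. Qed.

(** Levels in [[a; a0)] follow a shifted loss-free traversal from [a], levels in
    [[a0; b0]] the given interval, and levels above [b0] shifted runs from [b0]. *)
Lemma Rinf_at_min C L a0 b0 U0 a :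
  Rinf C L a0 b0 U0 -> (L <= a)%Q -> (a <= a0)%Q -> traversal C (Q2R L - Q2R a) 0 ->
  exists b U, Rinf C L a b U.
Proof.
  intros HR0 HLa Ha Hlow. destruct (traversal_RC C L (Q2R a) Hlow) as [U1 [w1 [Hw1 HR1]]].
  pose proof HR0 as [_ [Hab0 [_ H0]]]. apply Qle_Rle in Hab0, Ha, HLa.
  destruct (exists_rat_ge (Rmax (Q2R b0) (Q2R a0 + (w1 - Q2R a)))) as [b Hb].
  destruct (exists_rat_ge (Rmax (Rmax (Q2R U1 + (Q2R a0 - Q2R a)) (Q2R U0 + (Q2R b - Q2R b0))) (Q2R b)))
    as [U HU].
  pose proof (Rmax_l (Q2R b0) (Q2R a0 + (w1 - Q2R a))).
  pose proof (Rmax_r (Q2R b0) (Q2R a0 + (w1 - Q2R a))).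
  pose proof (Rmax_l (Rmax (Q2R U1 + (Q2R a0 - Q2R a)) (Q2R U0 + (Q2R b - Q2R b0))) (Q2R b)).
  pose proof (Rmax_r (Rmax (Q2R U1 + (Q2R a0 - Q2R a)) (Q2R U0 + (Q2R b - Q2R b0))) (Q2R b)).
  pose proof (Rmax_l (Q2R U1 + (Q2R a0 - Q2R a)) (Q2R U0 + (Q2R b - Q2R b0))).
  pose proof (Rmax_r (Q2R U1 + (Q2R a0 - Q2R a)) (Q2R U0 + (Q2R b - Q2R b0))).
  exists b, U. split; [apply Rle_Qle; lra|split; [apply Rle_Qle; lra|split; [apply Rle_Qle; lra|]]].
  intros w Hw. destruct (Rlt_le_dec w (Q2R a0)) as [Hlt|Hge].
  - replace w with (Q2R a + (w - Q2R a)) by ring.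
    apply RC_shift_into with U1 w1; [exact HR1|lra|lra|lra].
  - destruct (Rle_lt_dec w (Q2R b0)) as [Hle|Hgt].
    + destruct (H0 w (conj Hge Hle)) as [w2 [Hw2 HR2]].
      replace w with (w + 0) by ring. apply RC_shift_into with U0 w2; [exact HR2|lra|lra|lra].
    + destruct (H0 (Q2R b0) (conj Hab0 (Rle_refl _))) as [w2 [Hw2 HR2]].
      replace w with (Q2R b0 + (w - Q2R b0)) by ring.
      apply RC_shift_into with U0 w2; [exact HR2|lra|lra|lra].
Qed.

Theorem mainTheorem7 (C : cycleETP) (L : Q) :
  wf_cycle C ->
  (exists a b U : Q, Rinf C L a b U) ->
  exists amin : Q,
    (exists b U : Q, Rinf C L amin b U) /\
    (forall a b U : Q, Rinf C L a b U -> (amin <= a)%Q) /\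
    (forall (w : R) (U : Q), w < Q2R amin -> ~ infRun C L U w) /\
    (forall w : R, Q2R amin <= w -> exists U : Q, infRun C L U w).
Proof.
  intros _ [a0 [b0 [U0 HR0]]].
  destruct (traversal_max_low C _ (Rinf_traversal _ _ _ _ _ HR0)) as [q [Hq Hmax]].
  pose proof (traversal_low_nonpos _ _ _ Hq) as Hq0.
  assert (Hamin : Q2R (L - q) = Q2R L - Q2R q) by apply Q2R_minus.
  assert (Hmin : forall a b U, Rinf C L a b U -> (L - q <= a)%Q).
  { intros a b U H. apply Rinf_traversal, Hmax in H. apply Rle_Qle. lra. }
  assert (Hex : exists b U, Rinf C L (L - q) b U).
  { apply (Rinf_at_min C L a0 b0 U0); [exact HR0|apply Rle_Qle; lra|exact (Hmin _ _ _ HR0)|].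
    rewrite Hamin. replace (Q2R L - (Q2R L - Q2R q)) with (Q2R q) by ring. exact Hq. }
  exists (L - q)%Q. split; [exact Hex|split; [exact Hmin|split]].
  - intros w U Hw Hrun. apply infRun_traversal, Hmax in Hrun. lra.
  - intros w Hw. destruct Hex as [b [U HR]].
    apply (infRun_shift C L U (Q2R (L - q))); [|exact Hw].
    apply (Rinf_infRun C L (L - q) b U); [exact HR|].
    destruct HR as [_ [Hab _]]. apply Qle_Rle in Hab. lra.
Qed.
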